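(* Let $\Sigma$ be a finite alphabet and $\mathsf{X} \in \{\mathsf{F},\mathsf{V}\}$. A regular language $L \subseteq \Sigma^*$ belongs to $\mathsf{X}(\mathcal{O}(\log n))$ if and only if $L^\mathsf{R}$ is recognized by a well-behaved DFA.
   Context: $L^\mathsf{R}$ is the set of reversals of words of $L$. A DFA $(Q,\Sigma,q_0,\delta,F)$ is well-behaved if every strongly connected component $C$ (inclusion-maximal set of mutually reachable states) reachable from $q_0$ satisfies: for all $q\in C$ and $u,v\in\Sigma^*$ with $|u|=|v|$ and $\delta(q,u),\delta(q,v)\in C$, $\delta(q,u)\in F\iff\delta(q,v)\in F$. A streaming algorithm is a deterministic (possibly infinite-state) automaton with an injective encoding of states into bit strings. Fixed-size: fix $a\in\Sigma$, $\mathrm{last}_n(a_1\cdots a_m)=a_{m-n+1}\cdots a_m$ if $n\le m$, else $a^{n-m}a_1\cdots a_m$; a fixed-size sliding window algorithm for $L$ is $(\mathcal{A}_n)_{n\ge0}$ with $\mathcal{A}_n$ accepting $\{w:\mathrm{last}_n(w)\in L\}$, space at $n$ = maximal encoding length of a state of $\mathcal{A}_n$. Variable-size: over $\Sigma\cup\{\downarrow\}$, the window is maintained by appending symbols of $\Sigma$ and letting $\downarrow$ delete the first window symbol (if any); an algorithm accepts the streams whose window lies in $L$, and its space at $n$ is the maximal encoding length of a state visited on a stream during which the window length never exceeds $n$. $\mathsf{F}(\mathcal{O}(\log n))$ / $\mathsf{V}(\mathcal{O}(\log n))$: languages with a fixed-size / variable-size algorithm of space $\mathcal{O}(\log n)$.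 *)

From mathcomp Require Import all_boot.
Set Implicit Arguments. Unset Strict Implicit. Unset Printing Implicit Defensive.

Record dfa (Sigma : finType) := Dfa {
  dfa_state :> finType;
  dfa_init : dfa_state;
  dfa_trans : dfa_state -> Sigma -> dfa_state;
  dfa_final : {set dfa_state} }.

Definition dfa_run (Sigma : finType) (A : dfa Sigma) (q : A) (u : seq Sigma) : A :=
  foldl (@dfa_trans Sigma A) q u.

Definition dfa_accepts (Sigma : finType) (A : dfa Sigma) (w : seq Sigma) : bool :=
  dfa_run (dfa_init A) w \in dfa_final A.

Definition recognizes (Sigma : finType) (A : dfa Sigma) (L : pred (seq Sigma)) : Prop :=
  forall w, dfa_accepts A w = L w.

Definition regular (Sigma : finType) (L : pred (seq Sigma)) : Prop :=
  exists A : dfa Sigma, recognizes A L.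

Definition rev_lang (Sigma : finType) (L : pred (seq Sigma)) : pred (seq Sigma) :=
  fun w => L (rev w).

Definition reach (Sigma : finType) (A : dfa Sigma) (q p : A) : Prop :=
  exists u, dfa_run q u = p.

Definition strongly_connected (Sigma : finType) (A : dfa Sigma) (C : {set A}) : Prop :=
  forall p q, p \in C -> q \in C -> reach p q.

Definition is_scc (Sigma : finType) (A : dfa Sigma) (C : {set A}) : Prop :=
  strongly_connected C /\
  forall D : {set A}, strongly_connected D -> C \subset D -> D \subset C.

Definition well_behaved (Sigma : finType) (A : dfa Sigma) : Prop :=
  forall C : {set A}, is_scc C ->
    (exists2 q0, q0 \in C & reach (dfa_init A) q0) ->
    forall (q : A) (u v : seq Sigma), q \in C -> size u = size v ->
      dfa_run q u \in C -> dfa_run q v \in C ->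
      (dfa_run q u \in dfa_final A) = (dfa_run q v \in dfa_final A).

Record stream_alg (Gamma : Type) := StreamAlg {
  sa_state : Type;
  sa_init : sa_state;
  sa_step : sa_state -> Gamma -> sa_state;
  sa_acc : sa_state -> bool;
  sa_enc : sa_state -> seq bool;
  sa_enc_inj : injective sa_enc }.

Definition sa_run (Gamma : Type) (A : stream_alg Gamma) (w : seq Gamma) : sa_state A :=
  foldl (@sa_step Gamma A) (sa_init A) w.

Definition log2 (n : nat) : nat := trunc_log 2 n.

Definition last_n (Sigma : Type) (a : Sigma) (n : nat) (w : seq Sigma) : seq Sigma :=
  if n <= size w then drop (size w - n) w else nseq (n - size w) a ++ w.

Definition fixed_sw_alg (Sigma : Type) (a : Sigma) (L : pred (seq Sigma))
    (A : nat -> stream_alg Sigma) : Prop :=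
  forall n w, sa_acc (sa_run (A n) w) = L (last_n a n w).

(* space at n = maximal encoding length of a state of A_n; "space O(log n)" *)
Definition in_F_log (Sigma : Type) (a : Sigma) (L : pred (seq Sigma)) : Prop :=
  exists A : nat -> stream_alg Sigma, fixed_sw_alg a L A /\
    exists c N, forall n, N <= n ->
      forall s : sa_state (A n), size (sa_enc s) <= c * log2 n.

(* variable-size model: alphabet Sigma + {down}, with None = down *)
Definition window (Sigma : Type) (s : seq (option Sigma)) : seq Sigma :=
  foldl (fun w x => match x with Some b => rcons w b | None => behead w end) [::] s.

Definition var_sw_alg (Sigma : Type) (L : pred (seq Sigma))
    (A : stream_alg (option Sigma)) : Prop :=
  forall s, sa_acc (sa_run A s) = L (window s).

(* space at n = maximal encoding length of a state visited on a stream during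
   which the window length never exceeds n; the visited states are the states
   reached after the prefixes of such a stream *)
Definition in_V_log (Sigma : Type) (L : pred (seq Sigma)) : Prop :=
  exists A : stream_alg (option Sigma), var_sw_alg L A /\
    exists c N, forall n, N <= n ->
      forall s : seq (option Sigma),
        (forall k, k <= size s -> size (window (take k s)) <= n) ->
        forall k, k <= size s -> size (sa_enc (sa_run A (take k s))) <= c * log2 n.

(* the model X in {F, V}; the fixed-size model carries its padding symbol a *)
Inductive sw_model (Sigma : Type) := Fixed (a : Sigma) | VarSize.

Definition in_class_log (Sigma : Type) (X : sw_model Sigma) (L : pred (seq Sigma)) : Prop :=
  match X with
  | Fixed a => in_F_log a L
  | VarSize => in_V_log L
  end.

(* If a DFA B for the reversed language is well-behaved, the acceptance of every
   future window is determined by a summary of the reversed current window: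
   for each pair of states (p, e), the time at which the run from p first enters
   the SCC of e and the state in which it enters.  Inside an SCC only the length
   of the remaining input matters, so windows with equal summaries are
   indistinguishable, and the polynomially many summaries give O(log n) bits.
   Conversely, if B is not well-behaved, a reachable state q carries two loops
   of equal length l distinguished by acceptance at some position; the 2^k
   concatenations of k such loops form windows of length about k * l that any
   sliding-window algorithm must keep apart, which costs k bits. *)

From mathcomp Require Import all_boot zify.
From Stdlib Require Import ClassicalEpsilon ProofIrrelevance FunctionalExtensionality Wf_nat.

Set Implicit Arguments. Unset Strict Implicit. Unset Printing Implicit Defensive.

Definition nat_of_bits (s : seq bool) : nat := foldr (fun (b : bool) n => b + 2 * n) 0 s.

(* Binary expansion, least significant bit first; the fuel [a] suffices. *)
Fixpoint bits_rec (fuel a : nat) : seq bool :=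
  if fuel is fuel'.+1 then (if a is 0 then [::] else odd a :: bits_rec fuel' a./2)
  else [::].

Definition bits (a : nat) : seq bool := bits_rec a a.

Lemma bits_recK fuel a : a <= fuel -> nat_of_bits (bits_rec fuel a) = a.
Proof.
elim: fuel a => [|fuel IH] [|a] //= le_a_fuel.
have := odd_double_half a.+1; rewrite -muln2 => Ea.
by rewrite IH; lia.
Qed.

Lemma bitsK : cancel bits nat_of_bits.
Proof. by move=> a; apply: bits_recK. Qed.

Lemma bits_inj : injective bits.
Proof. exact: can_inj bitsK. Qed.

Lemma size_bits_rec fuel a s : a < 2 ^ s -> size (bits_rec fuel a) <= s.
Proof.
elim: fuel a s => [|fuel IH] [|a] [|s] //=.
have := odd_double_half a.+1; rewrite expnS -muln2 ltnS => Ea lt_a.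
by apply: IH; lia.
Qed.

Lemma size_bits a s : a < 2 ^ s -> size (bits a) <= s.
Proof. exact: size_bits_rec. Qed.

Lemma nat_of_bits_lt s : nat_of_bits s < 2 ^ size s.
Proof. by elim: s => //= b s IH; rewrite expnS; case: b => /=; lia. Qed.

Lemma nat_of_bits_rcons_gt0 s : 0 < nat_of_bits (rcons s true).
Proof. by elim: s => //= b s; lia. Qed.

Lemma nat_of_bits_rcons_inj : injective (fun s => nat_of_bits (rcons s true)).
Proof.
elim=> [|b s IH] [|b' s'] //=.
- by have := nat_of_bits_rcons_gt0 s'; case: b'; lia.
- by have := nat_of_bits_rcons_gt0 s; case: b; lia.
- move=> eq_code.
  have [-> /IH -> //] : b = b' /\ nat_of_bits (rcons s true) = nat_of_bits (rcons s' true).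
  by case: b b' eq_code => [] [] /=; lia.
Qed.

Lemma card_le_exp2_size (T : finType) (f : T -> seq bool) s :
  injective f -> (forall t, size (f t) <= s) -> #|T| <= 2 ^ s.+1.
Proof.
move=> f_inj f_small.
have lt_code t : nat_of_bits (rcons (f t) true) < 2 ^ s.+1.
  apply: leq_trans (nat_of_bits_lt _) _.
  by rewrite size_rcons leq_exp2l // ltnS.
rewrite -[2 ^ s.+1]card_ord; apply: (@leq_card _ _ (fun t => Ordinal (lt_code t))).
by move=> t t' [] /nat_of_bits_rcons_inj /f_inj.
Qed.

(* A prefix-free pairing of bit strings. *)
Definition pair_bits (s t : seq bool) : seq bool :=
  flatten [seq [:: true; b] | b <- s] ++ false :: t.

Lemma pair_bits_inj s1 t1 s2 t2 :
  pair_bits s1 t1 = pair_bits s2 t2 -> s1 = s2 /\ t1 = t2.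
Proof.
rewrite /pair_bits; elim: s1 s2 => [|b s1 IH] [|b' s2] //=; first by case.
by case=> -> /IH [-> ->].
Qed.

Lemma size_pair_bits s t : size (pair_bits s t) = (size s).*2 + (size t).+1.
Proof. by rewrite /pair_bits size_cat; elim: s => //= b s IH; rewrite doubleS; lia. Qed.

Section Runs.
Variables (S : finType) (B : dfa S).
Implicit Types (p q e : B) (u v y : seq S).

Lemma run_cat q u v : dfa_run q (u ++ v) = dfa_run (dfa_run q u) v.
Proof. exact: foldl_cat. Qed.

Lemma run_take_split q y i j : i <= j ->
  dfa_run q (take j y) = dfa_run (dfa_run q (take i y)) (take (j - i) (drop i y)).
Proof. by move=> le_ij; rewrite -run_cat -takeD subnKC. Qed.

Lemma reach_trans p q e : reach p q -> reach q e -> reach p e.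
Proof. by move=> [u <-] [v <-]; exists (u ++ v); rewrite run_cat. Qed.

Lemma reach_run_take p y i j : i <= j ->
  reach (dfa_run p (take i y)) (dfa_run p (take j y)).
Proof. by move=> le_ij; rewrite (run_take_split _ _ le_ij); eexists. Qed.

Definition dfa_edge : rel B := fun p q => [exists b, dfa_trans p b == q].

Lemma reachP p q : reach p q <-> connect dfa_edge p q.
Proof.
split=> [[u <-] | /connectP [s]].
- elim: u p => [|b u IH] p; first exact: connect0.
  by apply: connect_trans (IH _); apply: connect1; apply/existsP; exists b.
- elim: s p => [|r s IH] p /=; first by move=> _ ->; exists [::].
  case/andP=> /existsP [b /eqP edge_pr] path_rs /(IH _ path_rs) [u <-].
  by exists (b :: u); rewrite -edge_pr.
Qed.

Definition scc e : {set B} := [set q | connect dfa_edge e q && connect dfa_edge q e].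

Lemma in_scc e q : q \in scc e <-> reach e q /\ reach q e.
Proof. by rewrite inE !reachP; split=> [/andP | [-> ->]]. Qed.

Lemma scc_refl e : e \in scc e.
Proof. by rewrite inE connect0. Qed.

Lemma is_scc_scc e : is_scc (scc e).
Proof.
split=> [p q /in_scc [_ pe] /in_scc [eq _] | D D_sc /subsetP sub_D].
  exact: reach_trans pe eq.
have De : e \in D by apply: sub_D; apply: scc_refl.
by apply/subsetP=> d Dd; apply/in_scc; split; apply: D_sc.
Qed.

End Runs.

Section Summaries.
Variables (S : finType) (B : dfa S).
Implicit Types (p q e : B) (y : seq S).

(* The first position at which the run from [p] along [y] lies in the SCC of
   [e], or [(size y).+1] if there is none. *)
Definition entry_time p e y : nat :=
  find (fun j => dfa_run p (take j y) \in scc e) (iota 0 (size y).+1).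

Definition entry_state p e y : B := dfa_run p (take (entry_time p e y) y).

Definition summary (m : nat) y : {ffun B * B -> 'I_m.+2 * B} :=
  [ffun pe => (inord (entry_time pe.1 pe.2 y), entry_state pe.1 pe.2 y)].

Lemma entry_time_le p e y j :
  j <= size y -> dfa_run p (take j y) \in scc e -> entry_time p e y <= j.
Proof.
move=> le_jy in_e; rewrite /entry_time; case: leqP => // lt_j.
by have := before_find 0 lt_j; rewrite nth_iota // add0n in_e.
Qed.

Lemma entry_time_max p e y : entry_time p e y <= (size y).+1.
Proof. by rewrite /entry_time -[X in _ <= X](size_iota 0) find_size. Qed.

Lemma entry_state_in_scc p e y : entry_time p e y <= size y -> entry_state p e y \in scc e.
Proof.
move=> le_ty; have found : has (fun j => dfa_run p (take j y) \in scc e) (iota 0 (size y).+1).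
  by rewrite has_find size_iota.
by have := nth_find 0 found; rewrite nth_iota ?add0n.
Qed.

Lemma summary_entry m y1 y2 p e :
  size y1 = m -> size y2 = m -> summary m y1 = summary m y2 ->
  entry_time p e y1 = entry_time p e y2 /\ entry_state p e y1 = entry_state p e y2.
Proof.
move=> y1m y2m eq_sum; have := congr1 (fun f : {ffun _} => f (p, e)) eq_sum.
rewrite !ffunE => -[/(congr1 val) /=]; rewrite !inordK ?ltnS.
- by move=> -> ->.
- by rewrite -y2m entry_time_max.
- by rewrite -y1m entry_time_max.
Qed.

(* Two runs from [p] that agree on all entry times and entry states are, after
   [j] steps, in a common SCC that both entered at the same time in the same
   state; well-behavedness then equates their acceptance. *)
Lemma well_behaved_summary_accept p m y1 y2 j :
  well_behaved B -> reach (dfa_init B) p ->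
  size y1 = m -> size y2 = m -> summary m y1 = summary m y2 -> j <= m ->
  (dfa_run p (take j y1) \in dfa_final B) = (dfa_run p (take j y2) \in dfa_final B).
Proof.
move=> wb reach_p y1m y2m eq_sum le_jm.
set s1 := dfa_run p (take j y1); set s2 := dfa_run p (take j y2).
have [t_eq e_eq] := summary_entry p s1 y1m y2m eq_sum.
have [t2_eq _] := summary_entry p s2 y1m y2m eq_sum.
set t := entry_time p s1 y1; set e := entry_state p s1 y1.
have le_tj : t <= j by apply: entry_time_le; rewrite ?y1m ?scc_refl.
have e_in : e \in scc s1 by apply: entry_state_in_scc; rewrite y1m; lia.
have le_t2j : entry_time p s2 y2 <= j by apply: entry_time_le; rewrite ?y2m ?scc_refl.
have e2_in : entry_state p s2 y1 \in scc s2.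
  by apply: entry_state_in_scc; rewrite t2_eq y1m -y2m; lia.
have e_run2 : e = dfa_run p (take t y2) by rewrite /e e_eq /entry_state -t_eq.
have s1E : s1 = dfa_run e (take (j - t) (drop t y1)) := run_take_split p y1 le_tj.
have s2E : s2 = dfa_run e (take (j - t) (drop t y2)).
  by rewrite e_run2; apply: run_take_split.
have s2_in : s2 \in scc s1.
  apply/in_scc; split.
    case/in_scc: e_in => s1e _; apply: reach_trans s1e _.
    by rewrite e_run2; apply: reach_run_take.
  case/in_scc: e2_in => s2e2 _; apply: reach_trans s2e2 (reach_run_take _ _ _).
  by rewrite t2_eq.
rewrite -/s1 -/s2 s1E s2E; apply: (wb _ (is_scc_scc s1)).
- by exists e => //; apply: reach_trans reach_p _; exists (take t y1).
- exact: e_in.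
- by rewrite !size_take !size_drop y1m y2m.
- by rewrite -s1E scc_refl.
- by rewrite -s2E.
Qed.

End Summaries.

Lemma exp2_dominates_linear c e N : exists m, N <= 2 ^ m /\ (c * (m + e)).+1 < 2 ^ m.
Proof.
set y := c + e + N + 2; exists (3 * y).
have lt_y : y < 2 ^ y := ltn_expl y (isT : 1 < 2).
have cube : y.+1 ^ 3 <= (2 ^ y) ^ 3 by rewrite leq_exp2r.
rewrite mulnC expnM; move: lt_y cube; rewrite /y !expnS expn0 muln1.
by set t := 2 ^ _ => lt_y cube; split; nia.
Qed.

Lemma exists_log_bound_lt c N l P :
  0 < l -> exists k, N <= k * l + P /\ (c * log2 (k * l + P)).+1 < k.
Proof.
move=> l_gt0; have [m [le_N lt_m]] := exp2_dominates_linear c (l + P) N.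
exists (2 ^ m); split; first by nia.
have le_n : 2 ^ m * l + P <= 2 ^ (m + (l + P)).
  by rewrite expnD; have := ltn_expl (l + P) (isT : 1 < 2); nia.
have le_log : log2 (2 ^ m * l + P) <= m + (l + P).
  by rewrite -[m + _](trunc_expnK _ (isT : 1 < 2)); apply: leq_trunc_log.
by apply: leq_ltn_trans lt_m; rewrite ltnS leq_mul2l le_log orbT.
Qed.

Lemma expn_le_exp2_log m n q K :
  1 < n -> m <= n -> (m.+2 * q) ^ K <= 2 ^ ((3 + q) * K * log2 n).
Proof.
move=> n_gt1 le_mn; set t := log2 n.
have t_gt0 : 0 < t by rewrite trunc_log_gt0.
have lt_n : n < 2 ^ t.+1 := trunc_log_ltn n (isT : 1 < 2).
have lt_q : q < 2 ^ q := ltn_expl q (isT : 1 < 2).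
have base : m.+2 * q <= 2 ^ ((3 + q) * t).
  apply: (@leq_trans (2 ^ (t.+2 + q))); last by rewrite leq_exp2l //; nia.
  by rewrite expnD; apply: leq_mul; [move: lt_n; rewrite !expnS; lia | exact: ltnW].
rewrite mulnAC expnM; elim: K => // K IH; rewrite !expnS; exact: leq_mul.
Qed.

Definition sw_equiv (S : Type) (L : pred (seq S)) (x1 x2 : seq S) : Prop :=
  size x1 = size x2 /\ forall z d, L (drop d (x1 ++ z)) = L (drop d (x2 ++ z)).

Section SummaryCodes.
Variables (S : finType) (L : pred (seq S)) (B : dfa S).
Hypotheses (hB : recognizes B (rev_lang L)) (wb : well_behaved B).

Lemma rev_lang_accepts v : L v = dfa_accepts B (rev v).
Proof. by rewrite hB /rev_lang revK. Qed.

Lemma summary_sw_equiv m x1 x2 :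
  size x1 = m -> size x2 = m -> summary B m (rev x1) = summary B m (rev x2) ->
  sw_equiv L x1 x2.
Proof.
move=> x1m x2m eq_sum; split=> [|z d]; first by rewrite x1m x2m.
rewrite !rev_lang_accepts !rev_drop !rev_cat !size_cat x1m x2m !take_cat !size_rev.
case: ltnP => // le_z; rewrite /dfa_accepts !run_cat.
apply: (well_behaved_summary_accept wb _ _ _ eq_sum); rewrite ?size_rev //.
- by exists (rev z).
- by lia.
Qed.

Definition summary_code (m : nat) (x : seq S) : seq bool :=
  bits (enum_rank (summary B m (rev x))).

Lemma summary_code_sw_equiv m x1 x2 :
  size x1 = m -> size x2 = m -> summary_code m x1 = summary_code m x2 -> sw_equiv L x1 x2.
Proof. by move=> x1m x2m /bits_inj/ord_inj/enum_rank_inj; apply: summary_sw_equiv. Qed.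

Lemma size_summary_code m n x : 1 < n -> m <= n ->
  size (summary_code m x) <= (3 + #|B|) * #|{: B * B}| * log2 n.
Proof.
move=> n_gt1 le_mn; apply: size_bits; apply: leq_trans (ltn_ord _) _.
by rewrite card_ffun !card_prod card_ord; apply: expn_le_exp2_log.
Qed.

End SummaryCodes.

Section ResidualAlgorithm.
Variables (G : Type) (M : pred (seq G)).

Definition residual (w : seq G) : seq G -> bool := fun z => M (w ++ z).

Lemma residual_rcons w g : residual (rcons w g) = fun z => residual w (g :: z).
Proof. by apply: functional_extensionality => z; rewrite /residual cat_rcons. Qed.

Definition residual_repr (f : seq G -> bool) : seq G :=
  epsilon (inhabits [::]) (fun w => f = residual w).

Lemma residual_reprK w : residual (residual_repr (residual w)) = residual w.
Proof.
exact: esym (epsilon_spec _ (fun w' => residual w = residual w') (ex_intro _ w erefl)).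
Qed.

Definition residual_state := {f : seq G -> bool | exists w, f = residual w}.

Lemma residual_step_spec (f : residual_state) g :
  exists w, (fun z => sval f (g :: z)) = residual w.
Proof. by case: f => f /= [w Ef]; exists (rcons w g); rewrite residual_rcons Ef. Qed.

Definition residual_step (f : residual_state) g : residual_state :=
  exist _ _ (residual_step_spec f g).

Variable enc : (seq G -> bool) -> seq bool.
Hypothesis enc_inj :
  forall w1 w2, enc (residual w1) = enc (residual w2) -> residual w1 = residual w2.

Lemma residual_enc_inj : injective (fun f : residual_state => enc (sval f)).
Proof.
move=> [f1 p1] [f2 p2] /= eq_enc.
have eq_f : f1 = f2 by case: p1 p2 eq_enc => w1 -> [w2 ->] /enc_inj.
by subst f2; rewrite (proof_irrelevance _ p1 p2).
Qed.

Definition residual_alg : stream_alg G :=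
  StreamAlg (exist _ (residual [::]) (ex_intro _ [::] erefl)) residual_step
    (fun f => sval f [::]) residual_enc_inj.

Lemma residual_alg_run w : sval (sa_run residual_alg w) = residual w.
Proof.
elim/last_ind: w => // w g IH.
by rewrite /sa_run foldl_rcons -/(sa_run _ w) /= IH residual_rcons.
Qed.

Lemma residual_alg_accepts w : sa_acc (sa_run residual_alg w) = M w.
Proof. by rewrite /= residual_alg_run /residual cats0. Qed.

Lemma residual_alg_enc w : sa_enc (sa_run residual_alg w) = enc (residual w).
Proof. by rewrite /= residual_alg_run. Qed.

End ResidualAlgorithm.

Section LastN.
Variables (S : Type) (a : S).

Lemma last_nE n v : last_n a n v = drop (size v) (nseq n a ++ v).
Proof.
by rewrite /last_n drop_cat size_nseq; case: leqP => // _; rewrite drop_nseq.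
Qed.

Lemma size_last_n n v : size (last_n a n v) = n.
Proof. by rewrite last_nE size_drop size_cat size_nseq addnK. Qed.

Lemma last_n_size n w : size w = n -> last_n a n w = w.
Proof. by move=> <-; rewrite /last_n leqnn subnn drop0. Qed.

Lemma last_n_cat n w z : last_n a n (w ++ z) = drop (size z) (last_n a n w ++ z).
Proof.
rewrite !last_nE size_cat addnC -drop_drop catA drop_cat size_cat size_nseq.
case: ltnP => // le_n; have -> : n = 0 by lia.
by rewrite add0n subnn drop0 (drop_size w).
Qed.

End LastN.

Section FixedSize.
Variables (S : finType) (a : S) (L : pred (seq S)) (B : dfa S).
Hypotheses (hB : recognizes B (rev_lang L)) (wb : well_behaved B).

Definition fixed_lang n : pred (seq S) := fun w => L (last_n a n w).

Definition fixed_enc n (f : seq S -> bool) : seq bool :=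
  summary_code B n (last_n a n (residual_repr (fixed_lang n) f)).

Lemma fixed_enc_inj n w1 w2 :
  fixed_enc n (residual (fixed_lang n) w1) = fixed_enc n (residual (fixed_lang n) w2) ->
  residual (fixed_lang n) w1 = residual (fixed_lang n) w2.
Proof.
move/(summary_code_sw_equiv hB wb (size_last_n _ _ _) (size_last_n _ _ _)) => [_ equiv].
rewrite -[LHS]residual_reprK -[RHS]residual_reprK.
by apply: functional_extensionality => z; rewrite /residual /fixed_lang !last_n_cat.
Qed.

Definition fixed_alg n : stream_alg S := residual_alg (@fixed_enc_inj n).

Lemma well_behaved_F_log : in_F_log a L.
Proof.
exists fixed_alg; split=> [n w | ]; first exact: residual_alg_accepts.
exists ((3 + #|B|) * #|{: B * B}|), 2 => n n_ge2 s.
exact: size_summary_code.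
Qed.

End FixedSize.

Section Windows.
Variables (S : Type) (L : pred (seq S)).

Definition window_step (x : seq S) (g : option S) : seq S :=
  if g is Some b then rcons x b else behead x.

Lemma window_cat s t : window (s ++ t) = foldl window_step (window s) t.
Proof. exact: foldl_cat. Qed.

Lemma foldl_window_some x w : foldl window_step x (map Some w) = x ++ w.
Proof. by elim: w x => [|b w IH] x /=; rewrite ?cats0 ?IH ?cat_rcons. Qed.

Lemma foldl_window_none x d : foldl window_step x (nseq d None) = drop d x.
Proof. by elim: d x => [|d IH] [|b x] /=; rewrite ?drop0 ?IH. Qed.

Definition window_lang : pred (seq (option S)) := fun s => L (window s).

Definition window_future (x : seq S) : seq (option S) -> bool :=
  fun t => L (foldl window_step x t).

Lemma residual_window s : residual window_lang s = window_future (window s).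
Proof.
by apply: functional_extensionality => t; rewrite /residual /window_lang window_cat.
Qed.

Lemma sw_equiv_window_step x1 x2 g :
  sw_equiv L x1 x2 -> sw_equiv L (window_step x1 g) (window_step x2 g).
Proof.
case: g => [b|] [eq_size equiv] /=.
  by split=> [|z d]; rewrite ?size_rcons ?eq_size // !cat_rcons.
case: x1 x2 eq_size equiv => [|b1 x1] [|b2 x2] //= [eq_size] equiv.
by split=> // z d; apply: (equiv z d.+1).
Qed.

Lemma sw_equiv_window_future x1 x2 :
  sw_equiv L x1 x2 -> window_future x1 = window_future x2.
Proof.
move=> equiv; apply: functional_extensionality => t; rewrite /window_future.
elim: t x1 x2 equiv => [|g t IH] x1 x2 equiv /=; last exact/IH/sw_equiv_window_step.
by have := equiv.2 [::] 0; rewrite !drop0 !cats0.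
Qed.

(* Choosing a shortest representative bounds the code of every visited state
   by the length of the current window. *)
Definition min_window (f : seq (option S) -> bool) : seq S :=
  epsilon (inhabits [::])
    (fun x => f = window_future x /\ forall y, f = window_future y -> size x <= size y).

Lemma min_windowP x :
  window_future (min_window (window_future x)) = window_future x /\
  size (min_window (window_future x)) <= size x.
Proof.
set f := window_future x.
pose has_size m := exists y, size y = m /\ f = window_future y.
have [m [[[y [ym fy]] m_min] _]] :=
  dec_inh_nat_subset_has_unique_least_element has_size (fun m => classic _)
    (ex_intro _ (size x) (ex_intro _ x (conj erefl erefl))).
have y_min : forall y', f = window_future y' -> size y <= size y'.
  by move=> y' fy'; rewrite ym; apply/leP/m_min; exists y'.
rewrite /min_window.
set P := fun x' => f = window_future x' /\ _.
have [<- min] := epsilon_spec (inhabits [::]) P (ex_intro _ y (conj fy y_min)).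
by split=> //; apply: min.
Qed.

End Windows.

Section VariableSize.
Variables (S : finType) (L : pred (seq S)) (B : dfa S).
Hypotheses (hB : recognizes B (rev_lang L)) (wb : well_behaved B).

Definition var_enc (f : seq (option S) -> bool) : seq bool :=
  let x := min_window L f in pair_bits (bits (size x)) (summary_code B (size x) x).

Lemma var_enc_inj s1 s2 :
  var_enc (residual (window_lang L) s1) = var_enc (residual (window_lang L) s2) ->
  residual (window_lang L) s1 = residual (window_lang L) s2.
Proof.
rewrite /var_enc !residual_window.
have [E1 _] := min_windowP L (window s1); have [E2 _] := min_windowP L (window s2).
move: E1 E2; set x1 := min_window _ _; set x2 := min_window _ _ => <- <-.
case/pair_bits_inj=> /bits_inj eq_size; rewrite -eq_size => eq_code.
apply: sw_equiv_window_future.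
exact: (summary_code_sw_equiv hB wb (m := size x1) erefl (esym eq_size) eq_code).
Qed.

Definition var_alg : stream_alg (option S) := residual_alg var_enc_inj.

Lemma well_behaved_V_log : in_V_log L.
Proof.
exists var_alg; split=> [s|]; first exact: residual_alg_accepts.
exists ((3 + #|B|) * #|{: B * B}| + 5), 2 => n n_gt1 s small k le_k.
rewrite residual_alg_enc /var_enc residual_window size_pair_bits.
have [_ le_x] := min_windowP L (window (take k s)).
set x := min_window _ _; have le_xn : size x <= n := leq_trans le_x (small k le_k).
have log_gt0 : 0 < log2 n by rewrite trunc_log_gt0.
have size_x_bits : size (bits (size x)) <= (log2 n).+1.
  exact/size_bits/(leq_ltn_trans le_xn)/trunc_log_ltn.
have := size_summary_code B x n_gt1 le_xn.
by move: size_x_bits; set C := _ * #|{: B * B}|; nia.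
Qed.

End VariableSize.

Section Pumping.
Variables (S : finType) (B : dfa S).
Implicit Types (q : B) (al be : seq S) (sg : seq bool).

Definition pump al be sg : seq S := flatten [seq if b then al else be | b <- sg].

Definition distinguishing_loops q al be (j : nat) : Prop :=
  [/\ size al = size be, j <= size al, dfa_run q al = q, dfa_run q be = q &
      (dfa_run q (take j al) \in dfa_final B) != (dfa_run q (take j be) \in dfa_final B)].

Lemma size_pump al be sg : size al = size be -> size (pump al be sg) = size sg * size al.
Proof. by move=> eq_size; elim: sg => //= b sg IH; rewrite size_cat IH; case: b; lia. Qed.

Lemma run_pump q al be sg :
  dfa_run q al = q -> dfa_run q be = q -> dfa_run q (pump al be sg) = q.
Proof.
move=> loop_al loop_be; elim: sg => //= b sg IH.
by rewrite /pump /= run_cat; case: b; rewrite ?loop_al ?loop_be.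
Qed.

Lemma take_pump al be sg i j : size al = size be -> j <= size al -> i < size sg ->
  take (i * size al + j) (pump al be sg) =
  pump al be (take i sg) ++ take j (if nth false sg i then al else be).
Proof.
move=> eq_size le_j lt_i.
rewrite /pump -{1}(cat_take_drop i sg) map_cat flatten_cat (drop_nth false lt_i) /=.
rewrite take_cat -/(pump _ _ _) size_pump // size_take lt_i ltnNge leq_addr /= addKn.
by rewrite takel_cat //; case: (nth _ _ _); rewrite -?eq_size.
Qed.

Lemma distinguishing_loops_gt0 q al be j : distinguishing_loops q al be j -> 0 < size al.
Proof.
case=> eq_size le_j _ _; case: al eq_size le_j => [|? ?] //.
by case: be => // _; rewrite leqn0 => /eqP ->; rewrite eqxx.
Qed.

Lemma pump_separates q al be j sg1 sg2 :
  distinguishing_loops q al be j -> size sg1 = size sg2 -> sg1 != sg2 ->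
  exists2 i, i < size sg1 &
    (dfa_run q (take (i * size al + j) (pump al be sg1)) \in dfa_final B) !=
    (dfa_run q (take (i * size al + j) (pump al be sg2)) \in dfa_final B).
Proof.
case=> eq_size le_j loop_al loop_be differ eq_sg neq_sg.
have [i lt_i neq_i] : exists2 i, i < size sg1 & nth false sg1 i != nth false sg2 i.
  case: (boolP [exists i : 'I_(size sg1), nth false sg1 i != nth false sg2 i]).
    by case/existsP=> i; exists i.
  move/existsPn=> same; case/eqP: neq_sg.
  apply: (eq_from_nth (x0 := false) eq_sg) => i lt_i.
  by apply/eqP; have := same (Ordinal lt_i); rewrite negbK.
exists i => //; rewrite !take_pump -?eq_sg // !run_cat !run_pump //.
by case: (nth _ sg1 i) (nth _ sg2 i) neq_i differ => [] [] //= _; rewrite eq_sym.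
Qed.

Lemma pump_injective (T : Type) k (st : k.-tuple bool -> T) (obs : T -> nat -> bool)
    q al be j :
  distinguishing_loops q al be j ->
  (forall (sg : k.-tuple bool) i, i < k -> obs (st sg) i =
     (dfa_run q (take (i * size al + j) (pump al be sg)) \in dfa_final B)) ->
  injective st.
Proof.
move=> loops obsE sg1 sg2 eq_st; apply: val_inj.
case: (eqVneq (val sg1) (val sg2)) => // neq; exfalso.
have [|i] := pump_separates loops _ neq; first by rewrite !size_tuple.
by rewrite size_tuple => lt_ik; rewrite -!obsE // eq_st eqxx.
Qed.

End Pumping.

Lemma fooling_space (T : Type) (enc : T -> seq bool) k (st : k.-tuple bool -> T) s :
  injective enc -> injective st -> (forall sg, size (enc (st sg)) <= s) -> k <= s.+1.
Proof.
move=> enc_inj st_inj small; rewrite -(leq_exp2l _ _ (isT : 1 < 2)).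
have := @card_le_exp2_size _ (enc \o st) s (inj_comp enc_inj st_inj) small.
by rewrite card_tuple card_bool.
Qed.

Section LowerBounds.
Variables (S : finType) (L : pred (seq S)) (B : dfa S).
Hypothesis hB : recognizes B (rev_lang L).

(* Reversed, the window of size [n] is [x0 ++ Z ++ take p Y]: the run of [B]
   reaches [q] after [x0], loops along [Z] and then reads [take p Y]. *)
Lemma fixed_window_probe (a : S) q x0 Y Z pad p :
  dfa_run (dfa_init B) x0 = q -> dfa_run q Z = q -> p <= size Y ->
  size Y + size pad = size x0 + (size Z + p) ->
  L (last_n a (size Y + size pad) (rev (Y ++ pad) ++ rev (x0 ++ Z))) =
  (dfa_run q (take p Y) \in dfa_final B).
Proof.
move=> x0q loop_Z le_p eq_n.
rewrite last_n_cat last_n_size ?size_rev ?size_cat // -rev_cat (rev_lang_accepts hB).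
rewrite rev_drop revK size_rev (_ : _ - _ = size (x0 ++ Z) + p); last first.
  by rewrite !size_cat; lia.
rewrite take_cat ltnNge leq_addr addKn /= takel_cat //.
by rewrite /dfa_accepts !run_cat x0q loop_Z.
Qed.

Lemma var_window_probe q x0 Y p :
  dfa_run (dfa_init B) x0 = q -> p <= size Y ->
  L (window (map Some (rev Y) ++ map Some (rev x0) ++ nseq (size Y - p) None)) =
  (dfa_run q (take p Y) \in dfa_final B).
Proof.
move=> x0q le_p; rewrite (rev_lang_accepts hB) /window !foldl_cat.
rewrite foldl_window_some foldl_window_some foldl_window_none /= rev_drop rev_cat !revK.
rewrite !size_cat !size_rev (_ : _ - _ = size x0 + p); last by lia.
by rewrite take_cat ltnNge leq_addr addKn /dfa_accepts run_cat x0q.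
Qed.

Lemma F_log_no_distinguishing_loops (a : S) q al be j :
  in_F_log a L -> reach (dfa_init B) q -> ~ distinguishing_loops q al be j.
Proof.
move=> [A [A_acc [c [N small]]]] [x0 x0q] loops.
have [eq_size le_j loop_al loop_be _] := loops.
set l := size al; set P := size x0 + j.
have [k [le_N lt_k]] := exists_log_bound_lt c N P (distinguishing_loops_gt0 loops).
set n := k * l + P.
pose st (sg : k.-tuple bool) := sa_run (A n) (rev (pump al be sg ++ nseq P a)).
(* Loops at [q] fill the window up to size [n], so that position [i * l + j]
   of the pumped word becomes the end of the reversed window. *)
pose obs s i :=
  sa_acc (foldl (@sa_step _ (A n)) s (rev (x0 ++ pump al be (nseq (k - i) true)))).
have st_inj : injective st.
  apply: (pump_injective (obs := obs) loops) => sg i lt_ik.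
  have size_Y : size (pump al be sg) = k * l by rewrite size_pump // size_tuple.
  rewrite /obs /st -foldl_cat A_acc.
  have -> : n = size (pump al be sg) + size (nseq P a) by rewrite size_Y size_nseq.
  apply: fixed_window_probe => //; first exact: run_pump.
    by rewrite size_Y; nia.
  by rewrite size_Y size_nseq size_pump // size_nseq /P; nia.
have := fooling_space (@sa_enc_inj _ (A n)) st_inj (fun sg => small n le_N _).
by rewrite leqNgt lt_k.
Qed.

Lemma V_log_no_distinguishing_loops q al be j :
  in_V_log L -> reach (dfa_init B) q -> ~ distinguishing_loops q al be j.
Proof.
move=> [A [A_acc [c [N small]]]] [x0 x0q] loops.
have [eq_size le_j _ _ _] := loops.
set l := size al.
have [k [le_N lt_k]] := exists_log_bound_lt c N 0 (distinguishing_loops_gt0 loops).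
set n := k * l + 0.
pose st (sg : k.-tuple bool) := sa_run A (map Some (rev (pump al be sg))).
pose obs s i := sa_acc (foldl (@sa_step _ A) s
  (map Some (rev x0) ++ nseq (k * l - (i * l + j)) None)).
have size_Y (sg : k.-tuple bool) : size (pump al be sg) = k * l.
  by rewrite size_pump // size_tuple.
have st_inj : injective st.
  apply: (pump_injective (obs := obs) loops) => sg i lt_ik.
  rewrite /obs /st -foldl_cat A_acc -(size_Y sg) (var_window_probe x0q) // size_Y; nia.
have st_small (sg : k.-tuple bool) : size (sa_enc (st sg)) <= c * log2 n.
  rewrite /st -[map _ _]take_size; apply: small => // i _.
  rewrite -map_take /window foldl_window_some size_take size_rev size_Y /n addn0.
  by case: ifP => // /ltnW.
have := fooling_space (@sa_enc_inj _ A) st_inj st_small.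
by rewrite leqNgt lt_k.
Qed.

End LowerBounds.

Lemma well_behaved_of_no_distinguishing_loops (S : finType) (B : dfa S) :
  (forall q al be j, reach (dfa_init B) q -> ~ distinguishing_loops q al be j) ->
  well_behaved B.
Proof.
move=> no_loops C [C_sc _] [q0 q0C init_q0] q u v qC eq_size uC vC.
apply/eqP/contraT => neq; exfalso.
have [ru ru_q] := C_sc _ _ uC qC; have [rv rv_q] := C_sc _ _ vC qC.
apply: (no_loops q (u ++ ru ++ v ++ rv) (v ++ rv ++ u ++ ru) (size u)).
  exact: reach_trans init_q0 (C_sc _ _ q0C qC).
split.
- by rewrite !size_cat eq_size; lia.
- by rewrite size_cat leq_addr.
- by rewrite !run_cat ru_q rv_q.
- by rewrite !run_cat rv_q ru_q.
- by rewrite take_size_cat // eq_size take_size_cat.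
Qed.

Definition rev_dfa (S : finType) (A : dfa S) : dfa S :=
  Dfa (dfa_final A) (fun (X : {set A}) b => [set p | dfa_trans p b \in X])
    [set X : {set A} | dfa_init A \in X].

Lemma rev_dfa_run (S : finType) (A : dfa S) y :
  dfa_run (dfa_init (rev_dfa A)) y = [set p | dfa_run p (rev y) \in dfa_final A].
Proof.
elim/last_ind: y => [|y b IH]; first by apply/setP => p; rewrite inE.
rewrite /dfa_run foldl_rcons -/(dfa_run _ y) IH.
by apply/setP => p; rewrite !inE rev_rcons.
Qed.

Lemma rev_dfa_recognizes (S : finType) (A : dfa S) L :
  recognizes A L -> recognizes (rev_dfa A) (rev_lang L).
Proof. by move=> hA w; rewrite /dfa_accepts rev_dfa_run !inE /rev_lang -hA. Qed.

Theorem corollary5p4 (Sigma : finType) (X : sw_model Sigma) (L : pred (seq Sigma)) :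
  regular L ->
  (in_class_log X L <->
   exists A : dfa Sigma, recognizes A (rev_lang L) /\ well_behaved A).
Proof.
move=> [A hA]; split=> [in_X | [B [hB wb]]].
- have hB := rev_dfa_recognizes hA.
  exists (rev_dfa A); split=> //; apply: well_behaved_of_no_distinguishing_loops.
  move=> q al be j reach_q; case: X in_X => [a|] in_X.
  + exact: (F_log_no_distinguishing_loops hB in_X reach_q).
  + exact: (V_log_no_distinguishing_loops hB in_X reach_q).
- case: X => [a|].
  + exact: well_behaved_F_log hB wb.
  + exact: well_behaved_V_log hB wb.
Qed.
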